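(* Let $\epsilon_{2q^*}$ be the smallest number such that $\big\|\sum_{j\in J}g_j\big\|^2\ge(1-\epsilon_{2q^*})\sum_{j\in J}\|g_j\|^2$ for all $J\subseteq\{1,\dots,q\}$ with $|J|\le 2q^*$ and all $g_j\in H_j$, $j\in J$. Then $\rho_{q^*}<1$ if and only if $\epsilon_{2q^*}<1$.
   Context: Let $q\ge1$ and let $X=(X_1,\dots,X_q)^T$ be a random vector with real-valued components. The space $L^2(\mathbb P^X)$ carries the inner product $\langle g,h\rangle=\mathbb E[g(X)h(X)]$ and norm $\|g\|=\langle g,g\rangle^{1/2}$. Let $H_q=L^2(\mathbb P^{X_q})$ and $H_j=\{h\in L^2(\mathbb P^{X_j}):\mathbb E[h(X_j)]=0\}$ for $j<q$, viewed as subspaces of $L^2(\mathbb P^X)$ via $x\mapsto h(x_j)$; for $J\subseteq\{1,\dots,q\}$ let $H_J=\sum_{j\in J}H_j$ (with $H_\emptyset=\{0\}$). Let $q^*\ge1$ be an integer. Let $\rho_{q^*}$ be the supremum of $\langle h_1,h_2\rangle/(\|h_1\|\|h_2\|)$ over all nonzero $h_1\in H_{J_1}$, $h_2\in H_{J_2}$ and all $J_1,J_2\subseteq\{1,\dots,q\}$ with $J_1\cap J_2=\emptyset$ and $|J_1|,|J_2|\le q^*$. *)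

From Stdlib Require Import Reals Lra List.
Import ListNotations.
Open Scope R_scope.
Set Implicit Arguments.

(* L^2(P^X) with <g,h> = E[g(X)h(X)]
   is an instance (semidefiniteness covers the a.s.-equality quotient). *)
Record IPS := {
  V :> Type;
  vzero : V;
  vadd : V -> V -> V;
  vscal : R -> V -> V;
  ip : V -> V -> R;
  vadd_assoc : forall x y z, vadd x (vadd y z) = vadd (vadd x y) z;
  vadd_comm : forall x y, vadd x y = vadd y x;
  vadd_0 : forall x, vadd vzero x = x;
  vscal_1 : forall x, vscal 1 x = x;
  vscal_assoc : forall a b x, vscal a (vscal b x) = vscal (a * b) x;
  vscal_addr : forall a x y, vscal a (vadd x y) = vadd (vscal a x) (vscal a y);
  vscal_addl : forall a b x, vscal (a + b) x = vadd (vscal a x) (vscal b x);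
  vadd_opp : forall x, vadd x (vscal (-1) x) = vzero;
  ip_sym : forall x y, ip x y = ip y x;
  ip_addl : forall x y z, ip (vadd x y) z = ip x z + ip y z;
  ip_scall : forall a x y, ip (vscal a x) y = a * ip x y;
  ip_pos : forall x, 0 <= ip x x
}.

Section Defs.
Variable E : IPS.

Definition vnorm (x : E) : R := sqrt (ip E x x).

Definition is_subspace (S : E -> Prop) : Prop :=
  S (vzero E) /\ (forall x y, S x -> S y -> S (vadd E x y)) /\
  (forall a x, S x -> S (vscal E a x)).

Definition vsum (J : list nat) (g : nat -> E) : E :=
  fold_right (fun j acc => vadd E (g j) acc) (vzero E) J.

Definition rsum (J : list nat) (f : nat -> R) : R :=
  fold_right (fun j acc => f j + acc) 0 J.

Definition admissible (q : nat) (J : list nat) (k : nat) : Prop :=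
  NoDup J /\ (forall j, In j J -> (1 <= j <= q)%nat) /\ (length J <= k)%nat.

Definition in_HJ (H : nat -> E -> Prop) (J : list nat) (h : E) : Prop :=
  exists g : nat -> E, (forall j, In j J -> H j (g j)) /\ h = vsum J g.

(* the set whose supremum is rho_{q*} *)
Definition rho_set (q qs : nat) (H : nat -> E -> Prop) (r : R) : Prop :=
  exists J1 J2 h1 h2,
    admissible q J1 qs /\ admissible q J2 qs /\
    (forall j, In j J1 -> ~ In j J2) /\
    in_HJ H J1 h1 /\ in_HJ H J2 h2 /\
    vnorm h1 <> 0 /\ vnorm h2 <> 0 /\
    r = ip E h1 h2 / (vnorm h1 * vnorm h2).

Definition rho_lt_1 (q qs : nat) (H : nat -> E -> Prop) : Prop :=
  exists c, c < 1 /\ forall r, rho_set q qs H r -> r <= c.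

Definition eps_ok (q qs : nat) (H : nat -> E -> Prop) (e : R) : Prop :=
  forall (J : list nat) (g : nat -> E),
    admissible q J (2 * qs) -> (forall j, In j J -> H j (g j)) ->
    (1 - e) * rsum J (fun j => (vnorm (g j)) ^ 2) <= (vnorm (vsum J g)) ^ 2.

(* epsilon_{2q*} < 1: the (upward closed) set of admissible e contains
   a number < 1, i.e. its smallest element is < 1 *)
Definition eps_lt_1 (q qs : nat) (H : nat -> E -> Prop) : Prop :=
  exists e, e < 1 /\ eps_ok q qs H e.

End Defs.

Arguments is_subspace {E} S.
Arguments rho_lt_1 {E} q qs H.
Arguments eps_lt_1 {E} q qs H.
Arguments rho_set {E} q qs H r.
Arguments eps_ok {E} q qs H e.
Arguments in_HJ {E} H J h.
Arguments vsum {E} J g.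
Arguments vnorm {E} x.

(* If every cross-correlation is at most c < 1, then ||h1 + h2||^2 >= (1 - c) (||h1||^2 + ||h2||^2)
   for h_i in disjoint H_{J_i}; peeling off one component at a time gives
   ||sum_J g_j||^2 >= (1 - c)^|J| sum_J ||g_j||^2 for |J| <= q*, and a set of size <= 2q*
   splits into two such halves.  Conversely, given h1 = sum g1_j and h2 = sum g2_j with unit
   norms, apply the epsilon inequality to (g1_j) and (-g2_j): the left side is
   ||h1 - h2||^2 = 2 - 2 <h1,h2>, while by ||sum_J g_j||^2 <= |J| sum_J ||g_j||^2 the right
   side is at least 2 (1 - epsilon) / q*. *)
From Stdlib Require Import Reals List Lra Lia.
Import ListNotations.
Open Scope R_scope.

Section InnerProduct.
Context {E : IPS}.
Local Notation Q x := (ip E x x).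

Lemma vscal_0l (x : E) : vscal E 0 x = vzero E.
Proof. replace 0 with (1 + -1) by ring. rewrite vscal_addl, vscal_1. apply vadd_opp. Qed.

Lemma vscal_0r a : vscal E a (vzero E) = vzero E.
Proof. rewrite <- (vscal_0l (vzero E)), vscal_assoc, Rmult_0_r. reflexivity. Qed.

Lemma ip_0l (y : E) : ip E (vzero E) y = 0.
Proof. rewrite <- (vscal_0l y), ip_scall. ring. Qed.

Lemma ip_0r (y : E) : ip E y (vzero E) = 0.
Proof. rewrite ip_sym. apply ip_0l. Qed.

Lemma ip_addr (x y z : E) : ip E x (vadd E y z) = ip E x y + ip E x z.
Proof. rewrite ip_sym, ip_addl, (ip_sym _ y), (ip_sym _ z). reflexivity. Qed.

Lemma ip_scalr a (x y : E) : ip E x (vscal E a y) = a * ip E x y.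
Proof. rewrite ip_sym, ip_scall, ip_sym. reflexivity. Qed.

Lemma ip_self_add (a b : E) : Q (vadd E a b) = Q a + 2 * ip E a b + Q b.
Proof. rewrite ip_addl, !ip_addr, (ip_sym _ b a). ring. Qed.

Lemma ip_self_scal s (x : E) : Q (vscal E s x) = s * s * Q x.
Proof. rewrite ip_scall, ip_scalr. ring. Qed.

Lemma vnorm_ge0 (x : E) : 0 <= vnorm x.
Proof. apply sqrt_pos. Qed.

Lemma vnorm_mul_self (x : E) : vnorm x * vnorm x = Q x.
Proof. apply sqrt_sqrt, ip_pos. Qed.

Lemma vnorm_sq (x : E) : vnorm x ^ 2 = Q x.
Proof. rewrite <- vnorm_mul_self. ring. Qed.

Lemma vnorm_opp (x : E) : vnorm (vscal E (-1) x) = vnorm x.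
Proof. unfold vnorm. rewrite ip_self_scal. f_equal. ring. Qed.

Lemma ip_le_weighted (a b : E) s : 0 < s -> 2 * ip E a b <= s * Q a + Q b / s.
Proof.
  intros Hs.
  assert (Hpos := ip_pos E (vadd E (vscal E s a) (vscal E (-1) b))).
  rewrite ip_self_add, !ip_self_scal, ip_scall, ip_scalr in Hpos.
  apply Rmult_le_reg_l with s; [lra|].
  replace (s * (s * Q a + Q b / s)) with (s * s * Q a + Q b) by (field; lra).
  lra.
Qed.

Lemma ip_le0_of_self_eq0 (a b : E) : Q a = 0 -> ip E a b <= 0.
Proof.
  intros Ha. apply Rnot_lt_le. intros Hx.
  set (x := ip E a b) in *.
  assert (Hb := ip_pos E b).
  (* with s = (Q b + 1) / (2 x) the weighted bound reads 2 x <= 2 x Q b / (Q b + 1) *)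
  assert (Hw := ip_le_weighted a b ((Q b + 1) / (2 * x)) ltac:(apply Rdiv_lt_0_compat; lra)).
  rewrite Ha, Rmult_0_r, Rplus_0_l in Hw. fold x in Hw.
  replace (Q b / ((Q b + 1) / (2 * x))) with (2 * x * Q b / (Q b + 1)) in Hw
    by (field; lra).
  apply Rmult_le_compat_r with (r := Q b + 1) in Hw; [|lra].
  replace (2 * x * Q b / (Q b + 1) * (Q b + 1)) with (2 * x * Q b) in Hw by (field; lra).
  nra.
Qed.

Lemma ip_self_eq0_orth (a b : E) : Q a = 0 -> ip E a b = 0.
Proof.
  intros Ha. apply Rle_antisym; [now apply ip_le0_of_self_eq0|].
  assert (H := ip_le0_of_self_eq0 a (vscal E (-1) b) Ha).
  rewrite ip_scalr in H. lra.
Qed.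

Lemma ip_self_add_ge (c : R) (a b : E) : 0 <= c ->
  - (c * (vnorm a * vnorm b)) <= ip E a b ->
  (1 - c) * (Q a + Q b) <= Q (vadd E a b).
Proof.
  intros Hc Hab. rewrite ip_self_add, <- !vnorm_mul_self.
  assert (Hsq := Rle_0_sqr (vnorm a - vnorm b)). unfold Rsqr in Hsq.
  assert (c * (2 * (vnorm a * vnorm b)) <= c * (vnorm a * vnorm a + vnorm b * vnorm b))
    by (apply Rmult_le_compat_l; lra).
  lra.
Qed.

Lemma vsum_ext (J : list nat) (g g' : nat -> E) :
  (forall j, In j J -> g j = g' j) -> vsum J g = vsum J g'.
Proof.
  induction J as [|j J IH]; simpl; intros Hg; auto.
  rewrite Hg by auto. f_equal. apply IH. auto.
Qed.

Lemma vsum_app (A B : list nat) (g : nat -> E) :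
  vsum (A ++ B) g = vadd E (vsum A g) (vsum B g).
Proof.
  induction A as [|j A IH]; simpl.
  - now rewrite vadd_0.
  - rewrite IH. apply vadd_assoc.
Qed.

Lemma vsum_scal a (J : list nat) (g : nat -> E) :
  vsum J (fun j => vscal E a (g j)) = vscal E a (vsum J g).
Proof.
  induction J as [|j J IH]; simpl.
  - now rewrite vscal_0r.
  - now rewrite vscal_addr, IH.
Qed.

Lemma subspace_scal (S : E -> Prop) a (x : E) : is_subspace S -> S x -> S (vscal E a x).
Proof. intros [_ [_ Hs]]. apply Hs. Qed.

Lemma ip_self_vsum_le (J : list nat) (g : nat -> E) :
  Q (vsum J g) <= INR (length J) * rsum J (fun j => Q (g j)).
Proof.
  induction J as [|j J IH]; simpl vsum; simpl rsum.
  - rewrite ip_0l. simpl. lra.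
  - rewrite ip_self_add, length_cons, S_INR.
    assert (Hg := ip_pos E (g j)).
    destruct J as [|k J'].
    + simpl. rewrite ip_0r, ip_0l. lra.
    + set (n := INR (length (k :: J'))) in *.
      set (S := vsum (k :: J') g) in *.
      set (Rs := rsum (k :: J') (fun j => Q (g j))) in *.
      assert (Hn : 0 < n) by (apply lt_0_INR; simpl; lia).
      (* 2 <g_j, S> <= n Q g_j + Q S / n, and Q S / n <= Rs by induction *)
      assert (Hw := ip_le_weighted (g j) S n Hn).
      assert (Q S / n <= Rs).
      { apply Rmult_le_reg_l with n; [lra|].
        replace (n * (Q S / n)) with (Q S) by (field; lra). lra. }
      nra.
Qed.

End InnerProduct.

Lemma rsum_ext (J : list nat) (f f' : nat -> R) :
  (forall j, In j J -> f j = f' j) -> rsum J f = rsum J f'.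
Proof.
  induction J as [|j J IH]; simpl; intros Hf; auto.
  rewrite Hf by auto. f_equal. apply IH. auto.
Qed.

Lemma rsum_app (A B : list nat) f : rsum (A ++ B) f = rsum A f + rsum B f.
Proof. induction A as [|j A IH]; simpl; [ring | rewrite IH; ring]. Qed.

Lemma rsum_ge0 (J : list nat) f : (forall j, 0 <= f j) -> 0 <= rsum J f.
Proof. intros Hf; induction J as [|j J IH]; simpl; [lra | specialize (Hf j); lra]. Qed.

Lemma rsum_scal a (J : list nat) f : rsum J (fun j => a * f j) = a * rsum J f.
Proof. induction J as [|j J IH]; simpl; [ring | rewrite IH; ring]. Qed.

Lemma Rinv_le_scaled {k n m : R} : 0 < k -> 0 < n -> n * n <= k * m -> / k <= / n * / n * m.
Proof.
  intros Hk Hn Hm.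
  apply Rmult_le_reg_l with (k * (n * n)); [apply Rmult_lt_0_compat; nra|].
  replace (k * (n * n) * / k) with (n * n) by (field; lra).
  replace (k * (n * n) * (/ n * / n * m)) with (k * m) by (field; lra).
  exact Hm.
Qed.

Lemma NoDup_app_disjoint {A : Type} (l l' : list A) a :
  NoDup (l ++ l') -> In a l -> ~ In a l'.
Proof.
  induction l as [|x l IH]; simpl; intros Hn Ha; [contradiction|].
  inversion Hn as [|? ? Hx Hn']; subst.
  destruct Ha as [<-|Ha]; auto.
  intros Hb. apply Hx, in_or_app. auto.
Qed.

Lemma admissible_app_l {q} {A B : list nat} {k m} :
  admissible q (A ++ B) k -> (length A <= m)%nat -> admissible q A m.
Proof.
  intros [Hn [Hr _]] Hl. split; [exact (NoDup_app_remove_r _ _ Hn)|].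
  split; [intros j Hj; apply Hr, in_or_app; auto | exact Hl].
Qed.

Lemma admissible_app_r {q} {A B : list nat} {k m} :
  admissible q (A ++ B) k -> (length B <= m)%nat -> admissible q B m.
Proof.
  intros [Hn [Hr _]] Hl. split; [exact (NoDup_app_remove_l _ _ Hn)|].
  split; [intros j Hj; apply Hr, in_or_app; auto | exact Hl].
Qed.

Lemma admissible_app {q} {A B : list nat} {m} :
  admissible q A m -> admissible q B m -> (forall j, In j A -> ~ In j B) ->
  admissible q (A ++ B) (2 * m).
Proof.
  intros [NA [RA LA]] [NB [RB LB]] D. split; [|split].
  - now apply NoDup_app.
  - intros j Hj. apply in_app_or in Hj. destruct Hj; [apply RA | apply RB]; auto.
  - rewrite length_app. lia.
Qed.

Section Subspaces.
Variable E : IPS.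
Local Notation Q x := (ip E x x).
Variables (q qs : nat) (H : nat -> E -> Prop).
Hypothesis hH : forall j, (1 <= j <= q)%nat -> is_subspace (H j).

Lemma family_scal {J m g a} :
  admissible q J m -> (forall j, In j J -> H j (g j)) ->
  forall j, In j J -> H j (vscal E a (g j)).
Proof. intros [_ [Hr _]] Hg j Hj. apply subspace_scal; auto. Qed.

Lemma in_HJ_scal J h a :
  admissible q J qs -> in_HJ H J h -> in_HJ H J (vscal E a h).
Proof.
  intros AJ [g [Hg ->]].
  exists (fun j => vscal E a (g j)).
  split; [exact (family_scal AJ Hg) | symmetry; apply vsum_scal].
Qed.

Section RhoBound.
Variable c : R.
Hypothesis rho_le : forall r, rho_set q qs H r -> r <= c.

Lemma ip_ge_of_rho_bound J1 J2 h1 h2 :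
  admissible q J1 qs -> admissible q J2 qs -> (forall j, In j J1 -> ~ In j J2) ->
  in_HJ H J1 h1 -> in_HJ H J2 h2 ->
  - (c * (vnorm h1 * vnorm h2)) <= ip E h1 h2.
Proof.
  intros A1 A2 D I1 I2.
  destruct (Req_dec (vnorm h1) 0) as [Z1|Z1].
  { rewrite ip_self_eq0_orth, Z1 by (rewrite <- vnorm_mul_self, Z1; ring). lra. }
  destruct (Req_dec (vnorm h2) 0) as [Z2|Z2].
  { rewrite ip_sym, ip_self_eq0_orth, Z2 by (rewrite <- vnorm_mul_self, Z2; ring). lra. }
  assert (Hr : ip E h1 (vscal E (-1) h2) / (vnorm h1 * vnorm (vscal E (-1) h2)) <= c).
  { apply rho_le. exists J1, J2, h1, (vscal E (-1) h2).
    rewrite vnorm_opp.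
    exact (conj A1 (conj A2 (conj D (conj I1
             (conj (in_HJ_scal _ _ _ A2 I2) (conj Z1 (conj Z2 eq_refl))))))). }
  rewrite ip_scalr, vnorm_opp in Hr.
  assert (Hn : 0 < vnorm h1 * vnorm h2)
    by (apply Rmult_lt_0_compat; pose proof (vnorm_ge0 h1); pose proof (vnorm_ge0 h2); lra).
  apply Rmult_le_compat_r with (r := vnorm h1 * vnorm h2) in Hr; [|lra].
  replace (-1 * ip E h1 h2 / (vnorm h1 * vnorm h2) * (vnorm h1 * vnorm h2))
    with (- ip E h1 h2) in Hr by (field; lra).
  lra.
Qed.

Hypothesis c_range : 0 <= c <= 1.

Lemma ip_self_vsum_ge_pow (J : list nat) (g : nat -> E) (k : nat) :
  admissible q J qs -> (length J <= k)%nat -> (forall j, In j J -> H j (g j)) ->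
  (1 - c) ^ k * rsum J (fun j => Q (g j)) <= Q (vsum J g).
Proof.
  revert k. induction J as [|j J IH]; intros k AJ Hl Hg.
  - simpl. rewrite ip_0l. lra.
  - destruct k as [|k]; [simpl in Hl; lia|].
    destruct AJ as [Hn [Hr HlJ]]. inversion Hn as [|? ? Hj Hn']; subst.
    simpl in HlJ.
    assert (AJ' : admissible q J qs)
      by (split; [exact Hn' | split; [intros i Hi; apply Hr; simpl; auto | lia]]).
    assert (A1 : admissible q [j] qs)
      by (split; [repeat constructor; auto |
                  split; [intros i [<-|[]]; apply Hr; simpl; auto | simpl; lia]]).
    assert (IHk := IH k AJ' ltac:(simpl in Hl; lia) (fun i Hi => Hg i (or_intror Hi))).
    assert (Hpair : (1 - c) * (Q (g j) + Q (vsum J g)) <= Q (vadd E (g j) (vsum J g))).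
    { apply ip_self_add_ge; [lra|].
      apply ip_ge_of_rho_bound with [j] J; auto.
      - intros i [<-|[]]; auto.
      - exists g. split; [intros i [<-|[]]; apply Hg; simpl; auto|].
        simpl. now rewrite vadd_comm, vadd_0.
      - exists g. split; [intros i Hi; apply Hg; simpl; auto | reflexivity]. }
    simpl vsum; simpl rsum; simpl pow.
    assert (Hp := pow_incr (1 - c) 1 k ltac:(lra)). rewrite pow1 in Hp.
    assert (0 <= (1 - c) ^ k) by (apply pow_le; lra).
    assert (Hgj := ip_pos E (g j)).
    assert ((1 - c) ^ k * Q (g j) + (1 - c) ^ k * rsum J (fun j => Q (g j))
            <= Q (g j) + Q (vsum J g)) by nra.
    assert ((1 - c) * ((1 - c) ^ k * Q (g j) + (1 - c) ^ k * rsum J (fun j => Q (g j)))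
            <= (1 - c) * (Q (g j) + Q (vsum J g))) by (apply Rmult_le_compat_l; lra).
    lra.
Qed.

Lemma eps_ok_of_rho_bound : eps_ok q qs H (1 - (1 - c) ^ S qs).
Proof.
  intros J g AJ Hg.
  rewrite vnorm_sq, (rsum_ext J _ (fun j => Q (g j))) by (intros; apply vnorm_sq).
  assert (LA : (length (firstn qs J) <= qs)%nat) by apply firstn_le_length.
  assert (LB : (length (skipn qs J) <= qs)%nat)
    by (destruct AJ as [_ [_ LJ]]; rewrite length_skipn; lia).
  rewrite <- (firstn_skipn qs J) in AJ, Hg |- *.
  set (A := firstn qs J) in *. set (B := skipn qs J) in *.
  assert (AA : admissible q A qs) by exact (admissible_app_l AJ LA).
  assert (AB : admissible q B qs) by exact (admissible_app_r AJ LB).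
  assert (GA : forall j, In j A -> H j (g j)) by (intros; apply Hg, in_or_app; auto).
  assert (GB : forall j, In j B -> H j (g j)) by (intros; apply Hg, in_or_app; auto).
  rewrite vsum_app, rsum_app.
  assert (Hpair : (1 - c) * (Q (vsum A g) + Q (vsum B g)) <= Q (vadd E (vsum A g) (vsum B g))).
  { apply ip_self_add_ge; [lra|].
    apply ip_ge_of_rho_bound with A B; auto.
    - intros j Hj. destruct AJ as [Hn _]. exact (NoDup_app_disjoint _ _ _ Hn Hj).
    - exists g. auto.
    - exists g. auto. }
  assert (PA := ip_self_vsum_ge_pow A g qs AA LA GA).
  assert (PB := ip_self_vsum_ge_pow B g qs AB LB GB).
  assert ((1 - c) * ((1 - c) ^ qs * rsum A (fun j => Q (g j))
                     + (1 - c) ^ qs * rsum B (fun j => Q (g j)))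
          <= (1 - c) * (Q (vsum A g) + Q (vsum B g))) by (apply Rmult_le_compat_l; lra).
  simpl pow. lra.
Qed.

End RhoBound.

Lemma eps_ok_disjoint_pair e J1 J2 g1 g2 :
  eps_ok q qs H e -> admissible q J1 qs -> admissible q J2 qs ->
  (forall j, In j J1 -> ~ In j J2) ->
  (forall j, In j J1 -> H j (g1 j)) -> (forall j, In j J2 -> H j (g2 j)) ->
  (1 - e) * (rsum J1 (fun j => Q (g1 j)) + rsum J2 (fun j => Q (g2 j)))
    <= Q (vadd E (vsum J1 g1) (vsum J2 g2)).
Proof.
  intros Hok A1 A2 D G1 G2.
  set (g := fun j => if in_dec Nat.eq_dec j J1 then g1 j else g2 j).
  assert (g_l : forall j, In j J1 -> g j = g1 j).
  { intros j Hj. unfold g. now destruct (in_dec Nat.eq_dec j J1). }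
  assert (g_r : forall j, In j J2 -> g j = g2 j).
  { intros j Hj. unfold g. destruct (in_dec Nat.eq_dec j J1) as [i|]; [|reflexivity].
    exfalso. exact (D j i Hj). }
  assert (Hg : forall j, In j (J1 ++ J2) -> H j (g j)).
  { intros j Hj. apply in_app_or in Hj.
    destruct Hj; [rewrite g_l | rewrite g_r]; auto. }
  assert (Ho := Hok _ _ (admissible_app A1 A2 D) Hg).
  rewrite vnorm_sq, vsum_app, rsum_app, (vsum_ext J1 _ _ g_l), (vsum_ext J2 _ _ g_r),
    (rsum_ext J1 _ (fun j => Q (g1 j))), (rsum_ext J2 _ (fun j => Q (g2 j))) in Ho
    by (intros j Hj; rewrite ?g_l, ?g_r, vnorm_sq by auto; reflexivity).
  exact Ho.
Qed.

Lemma ip_self_le_qs_mass J g :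
  admissible q J qs -> Q (vsum J g) <= INR qs * rsum J (fun j => Q (g j)).
Proof.
  intros [_ [_ HJ]].
  apply Rle_trans with (1 := ip_self_vsum_le J g).
  apply Rmult_le_compat_r; [apply rsum_ge0; intros; apply ip_pos | now apply le_INR].
Qed.

Lemma rho_bound_of_eps_ok (e : R) : (1 <= qs)%nat -> e <= 1 -> eps_ok q qs H e ->
  forall r, rho_set q qs H r -> r <= 1 - (1 - e) / INR qs.
Proof.
  intros Hqs He Hok r [J1 [J2 [h1 [h2 [A1 [A2 [D [[g1 [G1 E1]] [[g2 [G2 E2]] [Z1 [Z2 Er]]]]]]]]]]].
  assert (Hq : 0 < INR qs) by (apply lt_0_INR; lia).
  set (n1 := vnorm h1) in *. set (n2 := vnorm h2) in *.
  assert (P1 : 0 < n1) by (pose proof (vnorm_ge0 h1); unfold n1 in *; lra).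
  assert (P2 : 0 < n2) by (pose proof (vnorm_ge0 h2); unfold n2 in *; lra).
  assert (Ho := eps_ok_disjoint_pair e J1 J2 (fun j => vscal E (/ n1) (g1 j))
                  (fun j => vscal E (- / n2) (g2 j)) Hok A1 A2 D
                  (family_scal A1 G1) (family_scal A2 G2)).
  assert (M1 := ip_self_le_qs_mass J1 g1 A1). assert (M2 := ip_self_le_qs_mass J2 g2 A2).
  rewrite (rsum_ext J1 _ (fun j => / n1 * / n1 * Q (g1 j))),
    (rsum_ext J2 _ (fun j => / n2 * / n2 * Q (g2 j))),
    !vsum_scal, !rsum_scal, <- E1, <- E2, ip_self_add, !ip_self_scal, ip_scall, ip_scalr in Ho
    by (intros; rewrite ip_self_scal; ring).
  rewrite <- E1, <- vnorm_mul_self in M1. rewrite <- E2, <- vnorm_mul_self in M2.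
  rewrite <- !vnorm_mul_self in Ho. fold n1 n2 in Ho, M1, M2.
  set (R1 := rsum J1 (fun j => Q (g1 j))) in *.
  set (R2 := rsum J2 (fun j => Q (g2 j))) in *.
  (* the left side is ||h1/n1 - h2/n2||^2 = 2 - 2 r *)
  replace (/ n1 * / n1 * (n1 * n1) + 2 * (/ n1 * (- / n2 * ip E h1 h2))
           + - / n2 * - / n2 * (n2 * n2)) with (2 - 2 * r) in Ho
    by (rewrite Er; field; lra).
  assert (Y1 := Rinv_le_scaled Hq P1 M1). assert (Y2 := Rinv_le_scaled Hq P2 M2).
  replace (- / n2 * - / n2) with (/ n2 * / n2) in Ho by ring.
  assert ((1 - e) * (/ INR qs + / INR qs) <= (1 - e) * (/ n1 * / n1 * R1 + / n2 * / n2 * R2))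
    by (apply Rmult_le_compat_l; lra).
  unfold Rdiv. lra.
Qed.

End Subspaces.

Theorem lemma2 (E : IPS) (q qs : nat) (H : nat -> E -> Prop)
  (hq : (1 <= q)%nat) (hqs : (1 <= qs)%nat)
  (hH : forall j, (1 <= j <= q)%nat -> is_subspace (H j)) :
  rho_lt_1 q qs H <-> eps_lt_1 q qs H.
Proof.
  split.
  - intros [c [Hc Hrho]].
    set (c0 := Rmax c 0).
    assert (Hc0 : 0 <= c0 < 1) by (unfold c0; split; [apply Rmax_r | apply Rmax_lub_lt; lra]).
    exists (1 - (1 - c0) ^ S qs). split.
    + assert (0 < (1 - c0) ^ S qs) by (apply pow_lt; lra). lra.
    + apply eps_ok_of_rho_bound; [exact hH | | split; lra].
      intros r Hr. apply Rle_trans with c; [auto | apply Rmax_l].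
  - intros [e [He Hok]].
    exists (1 - (1 - e) / INR qs). split.
    + assert (0 < (1 - e) / INR qs) by (apply Rdiv_lt_0_compat; [lra | apply lt_0_INR; lia]).
      lra.
    + apply rho_bound_of_eps_ok; [exact hH | exact hqs | lra | exact Hok].
Qed.
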